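(* Let $n\ge 1$ and $x,y\in S_n$. Then there exist an integer $N$ with $n\leq N\leq n(n+1)/2$ and permutations $v,w\in S_N$ such that $P(v)=P(w)$, $v(i)=w(i)$ for all $i\leq N-n$, and the pattern of $v$ in the last $n$ positions is $x$ and the pattern of $w$ in the last $n$ positions is $y$.
   Context: Permutations are written in one-line notation. $P(w)$ denotes the Robinson--Schensted insertion tableau of $w\in S_N$, obtained by successively column inserting $w(N),w(N-1),\dots,w(1)$ into the empty tableau (column insertion of $a$: place $a$ in the first column, bumping the smallest entry of that column larger than $a$, if any, which is then inserted into the next column in the same way, and so on). For $x\in S_n$ and $v\in S_N$, the pattern of $v$ in the last $n$ positions is $x$ if for all $1\le i<j\le n$: $v(N-n+i)<v(N-n+j)$ if and only if $x(i)<x(j)$. *)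

From mathcomp Require Import all_boot all_order all_fingroup.
Set Implicit Arguments. Unset Strict Implicit. Unset Printing Implicit Defensive.

(* A tableau is a list of columns (first column first); each column is
   listed from top to bottom. Entries are natural numbers. *)
Definition tableau := seq (seq nat).

Fixpoint col_insert (a : nat) (T : tableau) : tableau :=
  match T with
  | [::] => [:: [:: a]]
  | c :: T' =>
      let bigger := [seq b <- c | a < b] in
      if bigger is b0 :: _ then
        let b := foldr minn b0 bigger in
        [seq (if z == b then a else z) | z <- c] :: col_insert b T'
      else rcons c a :: T'
  end.

Definition oneline (N : nat) (w : 'S_N) : seq nat :=
  [seq (w i).+1 | i <- enum 'I_N].

(* P(w): column insert w(N), w(N-1), ..., w(1) into the empty tableau. *)
Definition Ptab (N : nat) (w : 'S_N) : tableau :=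
  foldr col_insert [::] (oneline w).

(* The pattern of v in its last n positions is x (positions 0-based:
   positions N-n, ..., N-1 correspond to N-n+1, ..., N in the paper). *)
Definition last_pattern (N n : nat) (v : 'S_N) (x : 'S_n) : Prop :=
  forall i j : 'I_n, i < j ->
    (nth 0 (oneline v) (N - n + i) < nth 0 (oneline v) (N - n + j))
    = (x i < x j).

From mathcomp Require Import all_boot all_order all_fingroup.
From mathcomp Require Import zify.
From Stdlib Require Import Relations.
Set Implicit Arguments. Unset Strict Implicit. Unset Printing Implicit Defensive.

(* Column-inserting w(N), ..., w(1) only depends on the Knuth class of the word
   w(1) ... w(N) under xzy -> zxy and yzx -> yxz (x < y < z): inserting the three
   letters into a column leaves the same column and bumps into the next column
   either the same word or again a Knuth-related one.
   Label the cell (p, j) of the quadrant by its rank in the diagonal-by-diagonal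
   order, and let u be the row reading word of the staircase tableau of size n
   whose column j lacks its top cell (0, j), the other cells moved up one row.
   Appending the label of (0, j) to a reading word and performing Knuth moves
   simulates its row insertion, which slides column j back into place whatever
   the state of the other columns.  So u followed by the labels of
   (0, x(1)), ..., (0, x(n)) is Knuth equivalent to the reading word of the full
   staircase, as is the word built from y: they have the same P, and
   N = n(n+1)/2 is the size of the staircase. *)

Fixpoint col_bump (a : nat) (c : seq nat) : seq nat * option nat :=
  if c is b :: c' then
    if a < b then (a :: c', Some b)
    else let p := col_bump a c' in (b :: p.1, p.2)
  else ([:: a], None).

Definition ocons (o : option nat) (s : seq nat) : seq nat :=
  if o is Some b then b :: s else s.

Lemma col_bump_filter a c : sorted ltn c -> a \notin c ->
  col_bump a c =
    if [seq b <- c | a < b] is b :: _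
    then ([seq if z == b then a else z | z <- c], Some b)
    else (rcons c a, None).
Proof.
elim: c => [|h t IH] //= Hs; rewrite in_cons negb_or => /andP[Hah Hat].
have /allP Hall := order_path_min ltn_trans Hs.
case: (ltngtP a h) => [Hlt|Hgt|Heq]; last by rewrite Heq eqxx in Hah.
- rewrite eqxx; congr (_ :: _, _); rewrite -[LHS]map_id.
  by apply/eq_in_map => z /Hall Hz; rewrite ifN //; lia.
- rewrite (IH (path_sorted Hs) Hat).
  case Ef: [seq b <- t | a < b] => [|b0 r] //=.
  have : b0 \in [seq b <- t | a < b] by rewrite Ef mem_head.
  by rewrite mem_filter => /andP[Hb0 _]; rewrite ifN //; lia.
Qed.

Lemma col_insert_cons a c T : sorted ltn c -> a \notin c ->
  col_insert a (c :: T) = (col_bump a c).1 :: oapp (col_insert^~ T) T (col_bump a c).2.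
Proof.
move=> Hs Ha; rewrite (col_bump_filter Hs Ha) /=.
case Ef: [seq b <- c | a < b] => [|b0 r] //=.
have : sorted ltn (b0 :: r) by rewrite -Ef; apply: sorted_filter => //; exact: ltn_trans.
move=> /(order_path_min ltn_trans) /allP Hr.
suff -> : foldr minn b0 r = b0 by rewrite minnn.
elim: r Hr {Ef} => //= z r IH Hr.
by rewrite IH => [|u Hu]; [apply/minn_idPr/ltnW/Hr/mem_head | apply/Hr; rewrite in_cons Hu orbT].
Qed.

Lemma col_bump_perm a c : perm_eq ((col_bump a c).1 ++ ocons (col_bump a c).2 [::]) (a :: c).
Proof.
elim: c => [|h t IH] //=; case: ifP => _ /=.
- by rewrite perm_cons cats1 perm_rcons.
- apply: (@perm_trans _ (h :: a :: t)); first by rewrite perm_cons.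
  exact/permPl/(perm_catCA [:: h] [:: a] t).
Qed.

Lemma mem_col_bump a c z : z \in (col_bump a c).1 -> (z == a) || (z \in c).
Proof. by move=> Hz; rewrite -in_cons -(perm_mem (col_bump_perm a c)) mem_cat Hz. Qed.

Lemma mem_col_bump_self a c : a \in (col_bump a c).1.
Proof. by elim: c => [|h t IH] /=; [|case: ifP]; rewrite ?inE ?IH ?eqxx ?orbT. Qed.

Lemma col_bump_gt a c b : (col_bump a c).2 = Some b -> a < b.
Proof. by elim: c => [|h t IH] //=; case: ifP => // Hah [<-]. Qed.

Lemma col_bump_mem a c b : (col_bump a c).2 = Some b -> b \in c.
Proof.
move=> Hb; have := perm_mem (col_bump_perm a c) b.
rewrite mem_cat Hb mem_head orbT in_cons => /esym.
by rewrite gtn_eqF ?(col_bump_gt Hb).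
Qed.

Lemma col_bump_notin a c b : uniq (a :: c) -> (col_bump a c).2 = Some b ->
  b \notin (col_bump a c).1.
Proof.
rewrite -(perm_uniq (col_bump_perm a c)) => + Hb.
by rewrite Hb cat_uniq /= orbF andbT => /andP[_ ->].
Qed.

Lemma sorted_col_bump a c : sorted ltn c -> a \notin c -> sorted ltn (col_bump a c).1.
Proof.
elim: c => [|h t IH] //= Hs; rewrite in_cons negb_or => /andP[Hah Hat].
move: Hs; rewrite (path_sortedE ltn_trans) => /andP[/allP Hall Hst].
case: ifP => Ha /=; rewrite (path_sortedE ltn_trans) ?IH ?Hst // andbT.
- by apply/allP => z /Hall; lia.
- by apply/allP => z /mem_col_bump /orP[/eqP->|/Hall //]; lia.
Qed.

Lemma col_bump_le a c z : sorted ltn c -> z \in c -> a < z ->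
  exists2 b, (col_bump a c).2 = Some b & b <= z.
Proof.
elim: c => [|h t IH] //= Hs; move: (Hs); rewrite (path_sortedE ltn_trans).
move=> /andP[/allP Hall Hst]; rewrite in_cons => /orP[/eqP->|Hz] Haz.
- by rewrite Haz; exists h.
- by case: ifP => Ha; [exists h => //; have := Hall z Hz; lia | exact: IH].
Qed.

(* Oriented: both words of the theorem are shown to rewrite to a common word. *)
Inductive knuth_rel : seq nat -> seq nat -> Prop :=
| KnuthXZY x y z : x < y < z -> knuth_rel [:: x; z; y] [:: z; x; y]
| KnuthYZX x y z : x < y < z -> knuth_rel [:: y; z; x] [:: y; x; z].

(* Inserts the letters of [w], last one first, into the column [c]; returns the
   new column and the bumped letters, in the order in which the next column has
   to receive them (last one first again). *)
Fixpoint col_bump_word (w c : seq nat) : seq nat * seq nat :=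
  if w is a :: w' then
    let p := col_bump_word w' c in
    let q := col_bump a p.1 in (q.1, ocons q.2 p.2)
  else (c, [::]).

(* The condition [c != [::]] makes the induction on the columns terminate. *)
Definition knuth_bump_compat (w1 w2 c : seq nat) : Prop :=
  (col_bump_word w1 c).1 = (col_bump_word w2 c).1 /\
  ((col_bump_word w1 c).2 = (col_bump_word w2 c).2 \/
   c != [::] /\ knuth_rel (col_bump_word w1 c).2 (col_bump_word w2 c).2).

Lemma col_bump_word_pass h t w : all (ltn h) w ->
  col_bump_word w (h :: t) = (h :: (col_bump_word w t).1, (col_bump_word w t).2).
Proof. by elim: w => [|a w IH] //= /andP[Ha /IH ->] /=; rewrite ltnNge ltnW. Qed.

Lemma knuth_bump_compat_pass h t w1 w2 : all (ltn h) w1 -> all (ltn h) w2 ->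
  knuth_bump_compat w1 w2 t -> knuth_bump_compat w1 w2 (h :: t).
Proof.
rewrite /knuth_bump_compat => /col_bump_word_pass -> /col_bump_word_pass -> /= [-> E].
by split=> //; case: E => [->|[_ K]]; [left | right].
Qed.

(* [lia] on the order hypotheses only: the others slow it down a lot. *)
Ltac order_lia := repeat match goal with H : ?P |- _ =>
  lazymatch P with
  | is_true (_ <= _) => fail | is_true (_ != _) => fail
  | @eq nat _ _ => fail | nat => fail
  | _ => clear H end end; lia.

Ltac decide_ltn := repeat (simpl; match goal with
  | |- context [?a < ?b] => rewrite (_ : a < b = true); last by order_lia
  | |- context [?a < ?b] => rewrite (_ : a < b = false); last by order_lia
  end); simpl.

Lemma knuth_bump_compat_xzy x y z c : x < y < z -> sorted ltn c ->
  x \notin c -> y \notin c -> z \notin c -> knuth_bump_compat [:: x; z; y] [:: z; x; y] c.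
Proof.
move=> /andP[Hxy Hyz]; elim: c => [|h t IH] Hs Hx Hy Hz.
  by rewrite /knuth_bump_compat; decide_ltn; split; [|left].
move: Hs Hx Hy Hz; rewrite /= (path_sortedE ltn_trans) !in_cons !negb_or.
move=> /andP[/allP Hall Hst] /andP[Hxh Hxt] /andP[Hyh Hyt] /andP[Hzh Hzt].
have [Hhx|Hxh'] : h < x \/ x < h by order_lia.
  by apply: knuth_bump_compat_pass (IH _ _ _ _) => //=; rewrite ?Hhx; order_lia.
rewrite /knuth_bump_compat; have [Hhy|Hyh'] : h < y \/ y < h by order_lia.
- decide_ltn; case E0: (col_bump y t) => [t0 r] /=; decide_ltn.
  case E1: (col_bump z t0) => [t1 q] /=; decide_ltn.
  split=> //; case: q E1 => [q0|] E1; last by left.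
  right; split=> //.
  have Hq0 : q0 \in t0 by have := @col_bump_mem z t0; rewrite E1; apply.
  have Hzq : z < q0 by have := @col_bump_gt z t0; rewrite E1; apply.
  have Hq0t : q0 \in t.
    by have := @mem_col_bump y t q0; rewrite E0 => /(_ Hq0) /orP[/eqP|] //; order_lia.
  have [r0 Er Hrq] := col_bump_le Hst Hq0t (ltn_trans Hyz Hzq).
  rewrite E0 /= in Er; subst r.
  have Hyr : y < r0 by have := @col_bump_gt y t; rewrite E0; apply.
  have Hrq' : r0 != q0.
    have := @col_bump_notin y t r0; rewrite E0 /= Hyt (sorted_uniq ltn_trans ltnn Hst).
    by move=> /(_ erefl erefl); apply: contraNneq => ->.
  by constructor; order_lia.
- decide_ltn; case E2: (col_bump z t) => [t2 q] /=; decide_ltn.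
  split=> //; case: q E2 => [q0|] E2; last by left.
  right; split=> //; constructor.
  have Hq0 : q0 \in t by have := @col_bump_mem z t; rewrite E2; apply.
  by have := Hall q0 Hq0; order_lia.
Qed.

Lemma knuth_bump_compat_yzx x y z c : x < y < z -> sorted ltn c ->
  x \notin c -> y \notin c -> z \notin c -> knuth_bump_compat [:: y; z; x] [:: y; x; z] c.
Proof.
move=> /andP[Hxy Hyz]; elim: c => [|h t IH] Hs Hx Hy Hz.
  by rewrite /knuth_bump_compat; decide_ltn; split; [|left].
move: Hs Hx Hy Hz; rewrite /= (path_sortedE ltn_trans) !in_cons !negb_or.
move=> /andP[/allP Hall Hst] /andP[Hxh Hxt] /andP[Hyh Hyt] /andP[Hzh Hzt].
have [Hhx|Hxh'] : h < x \/ x < h by order_lia.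
  by apply: knuth_bump_compat_pass (IH _ _ _ _) => //=; rewrite ?Hhx; order_lia.
rewrite /knuth_bump_compat; have [Hhz|Hzh'] : h < z \/ z < h by order_lia.
- decide_ltn; case E1: (col_bump z t) => [t1 q] /=; decide_ltn.
  case E2: (col_bump y t1) => [t2 b] /=.
  split=> //; case: q E1 => [q0|] E1; last by left.
  right; split=> //.
  have Hzq : z < q0 by have := @col_bump_gt z t; rewrite E1; apply.
  have Hzt1 : z \in t1 by have := mem_col_bump_self z t; rewrite E1.
  have Hst1 : sorted ltn t1 by have := sorted_col_bump Hst Hzt; rewrite E1.
  have [b0 Eb Hb0z] := col_bump_le Hst1 Hzt1 Hyz; rewrite E2 /= in Eb; subst b.
  have Hb0 : b0 \in t1 by have := @col_bump_mem y t1; rewrite E2; apply.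
  have Hhb : h < b0.
    have := @mem_col_bump z t b0; rewrite E1 => /(_ Hb0) /orP[/eqP-> //|/Hall //].
  by constructor; order_lia.
- case: t Hall Hst {IH Hxt Hyt Hzt} => [|h2 t] Hall Hst; first by decide_ltn; split; [|left].
  have Hh2 : h < h2 by apply: Hall; rewrite mem_head.
  decide_ltn; split=> //; right; split=> //.
  by constructor; order_lia.
Qed.

Lemma col_bump_word_knuth w1 w2 c : sorted ltn c -> uniq (w1 ++ c) -> knuth_rel w1 w2 ->
  knuth_bump_compat w1 w2 c.
Proof.
move=> Hs + Hk; rewrite cat_uniq => /and3P[_ /hasPn Hc _].
have Hn a : a \in w1 -> a \notin c by move=> Ha; apply/negP => /Hc; rewrite Ha.
case: Hk Hn => x y z Hxyz Hn.
- by apply: knuth_bump_compat_xzy; rewrite ?Hn ?inE ?eqxx ?orbT.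
- by apply: knuth_bump_compat_yzx; rewrite ?Hn ?inE ?eqxx ?orbT.
Qed.

Definition col_sorted_uniq (T : tableau) : bool :=
  all (sorted ltn) T && uniq (flatten T).

Lemma col_insert_sorted_uniq a T : col_sorted_uniq T -> a \notin flatten T ->
  col_sorted_uniq (col_insert a T) /\ perm_eq (flatten (col_insert a T)) (a :: flatten T).
Proof.
elim: T a => [|c T IH] a; first by [].
move=> /andP[/andP[Hc HT]]; rewrite [flatten _]/= mem_cat negb_or => Hu /andP[Hac HaT].
rewrite col_insert_cons // /col_sorted_uniq /= sorted_col_bump //=.
have Hu1 : uniq (a :: c ++ flatten T) by rewrite /= Hu mem_cat negb_or Hac HaT.
have := col_bump_perm a c; have Hb := @col_bump_mem a c.
case: (col_bump a c) Hb => c1 [b|] /= Hb Hp; rewrite ?cats0 in Hp; last first.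
  have Hp2 : perm_eq (c1 ++ flatten T) (a :: c ++ flatten T) by rewrite -cat_cons perm_cat2r.
  by rewrite (perm_uniq Hp2) Hu1 andbT.
have Hbc : b \in c := Hb b erefl.
have HbT : b \notin flatten T.
  by move: Hu; rewrite cat_uniq => /and3P[_ /hasPn H _]; apply/negP => /H; rewrite Hbc.
have Hu2 : uniq (flatten T) by move: Hu; rewrite cat_uniq => /and3P[].
have [/andP[HT' _] Hp'] := IH b (introT andP (conj HT Hu2)) HbT.
have Hp2 : perm_eq (c1 ++ flatten (col_insert b T)) (a :: c ++ flatten T).
  apply: (@perm_trans _ (c1 ++ b :: flatten T)); first by rewrite perm_cat2l.
  by rewrite -cat_rcons -cats1 -cat_cons perm_cat2r.
by rewrite (perm_uniq Hp2) Hu1 HT'.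
Qed.

Lemma foldr_col_insert_sorted_uniq T w : col_sorted_uniq T -> uniq (w ++ flatten T) ->
  col_sorted_uniq (foldr col_insert T w) /\
  perm_eq (flatten (foldr col_insert T w)) (w ++ flatten T).
Proof.
elim: w => [|a w IH] HT; first by split.
move=> /= /andP[Ha Hu].
have [HT' Hp] := IH HT Hu.
have Ha' : a \notin flatten (foldr col_insert T w) by rewrite (perm_mem Hp).
have [HT2 Hp2] := col_insert_sorted_uniq HT' Ha'.
by split=> //; apply: (perm_trans Hp2); rewrite perm_cons.
Qed.

Lemma col_bump_word_perm w c :
  perm_eq ((col_bump_word w c).1 ++ (col_bump_word w c).2) (w ++ c).
Proof.
elim: w => [|a w IH] /=; first by rewrite cats0.
have := col_bump_perm a (col_bump_word w c).1.
case: (col_bump a _) => c1 ob /= Hp.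
apply: (@perm_trans _ ((c1 ++ ocons ob [::]) ++ (col_bump_word w c).2)).
  by case: ob {Hp} => [b|] /=; rewrite ?cats0 // -cat_rcons cats1.
apply: (@perm_trans _ ((a :: (col_bump_word w c).1) ++ (col_bump_word w c).2)).
  by rewrite perm_cat2r.
by rewrite cat_cons perm_cons.
Qed.

Lemma foldr_col_insert_cons c T w : col_sorted_uniq (c :: T) -> uniq (w ++ flatten (c :: T)) ->
  foldr col_insert (c :: T) w = (col_bump_word w c).1 :: foldr col_insert T (col_bump_word w c).2.
Proof.
elim: w => [//|a w IH] HT /andP[Ha Hu] /=.
have [HTw Hp] := foldr_col_insert_sorted_uniq HT Hu.
rewrite IH // in HTw Hp *; move: HTw => /andP[/andP[Hc _] _].
have Hac : a \notin (col_bump_word w c).1.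
  by move: Ha; rewrite -(perm_mem Hp) /= mem_cat negb_or => /andP[].
by rewrite col_insert_cons //; case: (col_bump a _) => c1 [b|].
Qed.

Lemma foldr_col_insert_nil w : w != [::] ->
  foldr col_insert [::] w = foldr col_insert [:: [::]] w.
Proof. by elim: w => // a [|a' w] IH _ //; congr (col_insert a _); apply: IH. Qed.

Lemma knuth_rel_perm t1 t2 : knuth_rel t1 t2 -> perm_eq t1 t2.
Proof.
case=> x y z _.
- exact/permPl/(perm_catCA [:: x] [:: z] [:: y]).
- by rewrite perm_cons; exact/permPl/(perm_catCA [:: z] [:: x] [::]).
Qed.

Lemma foldr_col_insert_knuth T w1 w2 : col_sorted_uniq T -> uniq (w1 ++ flatten T) ->
  knuth_rel w1 w2 -> foldr col_insert T w1 = foldr col_insert T w2.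
Proof.
elim: T w1 w2 => [|c T IH] w1 w2 HT Hu Hk.
  have Hw1 : w1 != [::] by case: Hk.
  have Hw2 : w2 != [::] by case: Hk.
  rewrite !foldr_col_insert_nil // !foldr_col_insert_cons //; last first.
    by rewrite -(perm_uniq (perm_cat (knuth_rel_perm Hk) (perm_refl _))).
  by have [-> [->|[]]] := col_bump_word_knuth (c := [::]) isT Hu Hk.
have Hu2 : uniq (w2 ++ flatten (c :: T)).
  by rewrite -(perm_uniq (perm_cat (knuth_rel_perm Hk) (perm_refl _))).
rewrite !foldr_col_insert_cons //.
move: HT Hu; rewrite /col_sorted_uniq /= => /andP[/andP[Hc HTs] HuT] Hu.
have Hwc : uniq (w1 ++ c) by move: Hu; rewrite catA cat_uniq => /andP[].
have [-> [->|[_ Hk']]] := col_bump_word_knuth Hc Hwc Hk; first by [].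
congr (_ :: _); apply: IH Hk'.
  by move: HuT; rewrite /col_sorted_uniq HTs cat_uniq => /and3P[].
have Hp := perm_cat (col_bump_word_perm w1 c) (perm_refl (flatten T)).
by move: Hu; rewrite catA -(perm_uniq Hp) -catA cat_uniq => /and3P[].
Qed.

Inductive knuth_step : seq nat -> seq nat -> Prop :=
  KnuthStep p q t1 t2 : knuth_rel t1 t2 -> knuth_step (p ++ t1 ++ q) (p ++ t2 ++ q).

Definition knuth_eq : relation (seq nat) := clos_refl_trans (seq nat) knuth_step.

Lemma knuth_eq_perm w1 w2 : knuth_eq w1 w2 -> perm_eq w1 w2.
Proof.
elim=> {w1 w2} [_ _ [p q t1 t2 /knuth_rel_perm Hp]|w|w1 w2 w3 _ H12 _ H23].
- by rewrite perm_cat2l perm_cat2r.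
- exact: perm_refl.
- exact: perm_trans H12 H23.
Qed.

Lemma knuth_eq_cat p q w1 w2 : knuth_eq w1 w2 -> knuth_eq (p ++ w1 ++ q) (p ++ w2 ++ q).
Proof.
elim=> {w1 w2} [_ _ [p' q' t1 t2 Hk]|w|w1 w2 w3 _ H12 _ H23].
- by apply: rt_step; rewrite -!catA; have := KnuthStep (p ++ p') (q' ++ q) Hk; rewrite -!catA.
- exact: rt_refl.
- exact: rt_trans H12 H23.
Qed.

Lemma knuth_eq_rel t1 t2 : knuth_rel t1 t2 -> knuth_eq t1 t2.
Proof. by move=> Hk; apply: rt_step; have := KnuthStep [::] [::] Hk; rewrite !cats0. Qed.

Definition Pword (w : seq nat) : tableau := foldr col_insert [::] w.

Lemma knuth_eq_Pword w1 w2 : knuth_eq w1 w2 -> uniq w1 -> Pword w1 = Pword w2.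
Proof.
elim=> {w1 w2} [_ _ [p q t1 t2 Hk]|//|w1 w2 w3 H12 IH12 _ IH23] Hu; last first.
  by rewrite IH12 // IH23 // -(perm_uniq (knuth_eq_perm H12)).
rewrite /Pword !foldr_cat; congr (foldr _ _ _).
have Htq : uniq (t1 ++ q) by move: Hu; rewrite cat_uniq => /and3P[].
have Hq : uniq (q ++ flatten [::]) by move: Htq; rewrite cats0 cat_uniq => /and3P[].
have [HT Hpq] := @foldr_col_insert_sorted_uniq [::] q isT Hq.
apply: foldr_col_insert_knuth Hk => //.
by rewrite (perm_uniq (perm_cat (perm_refl t1) Hpq)) cats0.
Qed.

Lemma knuth_eq_shift_small R y x : sorted ltn (y :: R) -> x < y ->
  knuth_eq (y :: R ++ [:: x]) (y :: x :: R).
Proof.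
elim: R y => [|r R IH] y Hs Hxy; first exact: rt_refl.
move: Hs => /= /andP[Hyr Hs].
apply: (@rt_trans _ _ _ [:: y, r, x & R]).
  by have := knuth_eq_cat [:: y] [::] (IH r Hs (ltn_trans Hxy Hyr)); rewrite !cats0.
by apply: (knuth_eq_cat [::] R (knuth_eq_rel (@KnuthYZX x y r _))); rewrite Hxy.
Qed.

Lemma knuth_eq_shift_large R c x : sorted ltn (rcons R c) -> all (ltn^~ x) R -> x < c ->
  knuth_eq (R ++ [:: c; x]) (c :: R ++ [:: x]).
Proof.
elim: R => [|r R IH] Hs /= Hx Hxc; first exact: rt_refl.
move: Hx => /andP[Hrx Hx]; have Hs' := path_sorted Hs.
apply: (@rt_trans _ _ _ [:: r, c & R ++ [:: x]]).
  by have := knuth_eq_cat [:: r] [::] (IH Hs' Hx Hxc); rewrite !cats0.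
case: R {IH Hx} Hs Hs' => [|m R] /= Hs Hs'.
  by apply: (knuth_eq_cat [::] [::] (knuth_eq_rel (@KnuthXZY r x c _))); rewrite Hrx.
have Hrm : r < m by case/andP: Hs.
have Hmc : m < c.
  by move: Hs'; rewrite (path_sortedE ltn_trans) => /andP[/allP -> //]; rewrite mem_rcons mem_head.
by apply: (knuth_eq_cat [::] (R ++ [:: x]) (knuth_eq_rel (@KnuthXZY r m c _))); rewrite Hrm.
Qed.

Lemma knuth_eq_row_insert R1 c R2 x : sorted ltn (R1 ++ c :: R2) ->
  all (ltn^~ x) R1 -> x < c -> knuth_eq (R1 ++ c :: R2 ++ [:: x]) (c :: R1 ++ x :: R2).
Proof.
move=> Hs Hx Hxc; have [_ Hs2] := cat_sorted2 Hs.
apply: (@rt_trans _ _ _ (R1 ++ [:: c, x & R2])).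
  by have := knuth_eq_cat R1 [::] (knuth_eq_shift_small Hs2 Hxc); rewrite !cats0.
have Hs1 : sorted ltn (rcons R1 c) by move: Hs; rewrite sorted_cat_cons => /andP[].
by have := knuth_eq_cat [::] R2 (knuth_eq_shift_large Hs1 Hx Hxc); rewrite /= -!catA.
Qed.

(* The rank of the cell (p, j) when the quadrant is enumerated diagonal by
   diagonal from 1; the cells with p + j < n get the labels 1, ..., 'C(n.+1, 2). *)
Definition cell (p j : nat) : nat := 'C((p + j).+1, 2) + j.+1.

Lemma cell_lt_diag p j p' j' : p + j < p' + j' -> cell p j < cell p' j'.
Proof.
move=> H; have := leq_bin2l 2 (H : (p + j).+2 <= (p' + j').+1).
by rewrite /cell binS bin1; lia.
Qed.

Lemma cell_lt p j p' j' : p + j <= p' + j' -> j < j' -> cell p j < cell p' j'.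
Proof.
rewrite leq_eqVlt => /orP[/eqP E|/cell_lt_diag //] Hj.
by rewrite /cell E ltn_add2l.
Qed.

Lemma cell_inj p j p' j' : cell p j = cell p' j' -> p = p' /\ j = j'.
Proof.
move=> E; case: (ltngtP (p + j) (p' + j')) => [/cell_lt_diag|/cell_lt_diag|Ed].
- by rewrite E ltnn.
- by rewrite E ltnn.
- by move: E; rewrite /cell Ed => /addnI [Ej]; split=> //; lia.
Qed.

Lemma cell_le p j n : p + j < n -> cell p j <= 'C(n.+1, 2).
Proof.
move=> H; have := leq_bin2l 2 (H : (p + j).+2 <= n.+1).
by rewrite /cell binS bin1; lia.
Qed.

Lemma ltn_cell0 i j : (cell 0 i < cell 0 j) = (i < j).
Proof.
apply/idP/idP => [|H]; last exact: (@cell_lt_diag 0 i 0 j H).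
have cell0E d : cell 0 d = 'C(d.+2, 2) by rewrite /cell add0n [in RHS]binS bin1.
by rewrite !ltnNge !cell0E; apply: contra => H; apply: leq_bin2l.
Qed.

Section Staircase.
Variable n : nat.

(* The staircase of size [n] in which column [j] is complete iff [a j]: row [i]
   holds [cell i j] in complete columns and [cell i.+1 j] in the others, and its
   last cell, in column [n.-1 - i], is present only if that column is complete.
   [upper_word a m] reads rows [n.-1], ..., [m], shortest row first. *)
Definition row_size (a : nat -> bool) (i : nat) : nat := n.-1 - i + a (n.-1 - i).

Definition stair_row (a : nat -> bool) (i : nat) : seq nat :=
  [seq cell (i.+1 - a j) j | j <- iota 0 (row_size a i)].

Definition upper_word (a : nat -> bool) (m : nat) : seq nat :=
  flatten (rev [seq stair_row a i | i <- iota m (n - m)]).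

Definition stair_word (a : nat -> bool) : seq nat := upper_word a 0.

Lemma upper_wordS a m : m < n -> upper_word a m = upper_word a m.+1 ++ stair_row a m.
Proof.
move=> Hm; rewrite /upper_word (_ : n - m = (n - m.+1).+1); last by lia.
by rewrite /= rev_cons flatten_rcons.
Qed.

Lemma eq_upper_word a b m : a =1 b -> upper_word a m = upper_word b m.
Proof.
move=> Eab; rewrite /upper_word /stair_row /row_size; congr (flatten (rev _)).
by apply: eq_map => i; rewrite Eab; apply: eq_map => j; rewrite Eab.
Qed.

Lemma sorted_stair_row a i : sorted ltn (stair_row a i).
Proof.
rewrite /stair_row; elim: (row_size a i) 0 => [|l IH] s //=.
case: l IH => [|l] IH //=; apply/andP; split; last exact: (IH s.+1).
by apply: cell_lt => //; case: (a s); case: (a s.+1); lia.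
Qed.

Lemma mem_upper_word a m z : z \in upper_word a m ->
  exists i j, [/\ m <= i < n, j < row_size a i & z = cell (i.+1 - a j) j].
Proof.
rewrite /upper_word => /flattenP[r]; rewrite mem_rev => /mapP[i].
rewrite mem_iota => /andP[Hmi Hin] -> /mapP[j]; rewrite mem_iota => /andP[_ Hj] ->.
by exists i, j; split=> //; rewrite Hmi; lia.
Qed.

Lemma uniq_upper_word a m : uniq (upper_word a m).
Proof.
move Ed : (n - m) => d; elim: d m Ed => [|d IH] m Ed; first by rewrite /upper_word Ed.
have Hm : m < n by lia.
rewrite upper_wordS // cat_uniq IH /=; last by lia.
rewrite (sorted_uniq ltn_trans ltnn (sorted_stair_row a m)) andbT.
apply/hasPn => _ /mapP[j _ ->]; apply/negP => /mem_upper_word [i [j' [/andP[Hi _] _ E]]].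
by case: (cell_inj E) => Ep Ej; move: Ep; rewrite Ej; case: (a j'); lia.
Qed.

Section ColumnCompletion.
Variables (a : nat -> bool) (k : nat).
Hypotheses (Hk : k < n) (Hak : a k = false).
Let a' j := (j == k) || a j.
Let h := n.-1 - k.

Lemma stair_row_above i : h < i -> i < n -> stair_row a' i = stair_row a i.
Proof.
move=> Hhi Hin; rewrite /stair_row /row_size /a' (_ : (n.-1 - i == k) = false) /=; last first.
  by apply/negbTE; rewrite /h in Hhi; lia.
apply/eq_in_map => j; rewrite mem_iota add0n => Hj.
by rewrite (_ : (j == k) = false) //; apply/negbTE; rewrite /h in Hhi; move: Hj; case: (a _); lia.
Qed.

Lemma upper_word_above m : h < m -> upper_word a' m = upper_word a m.
Proof.
move=> Hm; rewrite /upper_word; congr (flatten (rev _)); apply/eq_in_map => i.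
by rewrite mem_iota => /andP[H1 H2]; apply: stair_row_above; lia.
Qed.

Lemma stair_row_end : stair_row a' h = stair_row a h ++ [:: cell h k].
Proof.
rewrite /stair_row /row_size /a' (_ : n.-1 - h = k); last by rewrite /h; lia.
rewrite eqxx Hak /= addn0 addn1 -[k.+1]addn1 iotaD map_cat /= add0n eqxx subn1.
congr (_ ++ _); apply/eq_in_map => j; rewrite mem_iota add0n => Hj.
by rewrite (_ : (j == k) = false) //; apply/negbTE; lia.
Qed.

Lemma stair_row_below m : m < h ->
  exists R1 R2, [/\ stair_row a m = R1 ++ cell m.+1 k :: R2,
                    stair_row a' m = R1 ++ cell m k :: R2
                  & all (ltn^~ (cell m k)) R1].
Proof.
move=> Hm.
have Esize : row_size a' m = row_size a m.
  by rewrite /row_size /a' (_ : (n.-1 - m == k) = false) //; apply/negbTE; rewrite /h in Hm; lia.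
have Hsize : k < row_size a m by rewrite /row_size; rewrite /h in Hm; lia.
have Ei : iota 0 (row_size a m) = iota 0 k ++ k :: iota k.+1 (row_size a m - k.+1).
  by rewrite -[in LHS](subnKC Hsize) -addn1 !iotaD -catA !add0n.
exists [seq cell (m.+1 - a j) j | j <- iota 0 k],
       [seq cell (m.+1 - a j) j | j <- iota k.+1 (row_size a m - k.+1)]; split.
- by rewrite /stair_row Ei map_cat /= Hak subn0.
- rewrite /stair_row Esize Ei map_cat /= /a' eqxx /= subn1 /=.
  congr (_ ++ _ :: _); apply/eq_in_map => j; rewrite mem_iota => /andP[Hj1 Hj2];
    by rewrite (_ : (j == k) = false) //; apply/negbTE; lia.
- apply/allP => r /mapP[j]; rewrite mem_iota add0n => /andP[_ Hj] ->.
  by apply: cell_lt => //; case: (a j); lia.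
Qed.

Lemma knuth_eq_upper_insert d : d <= h ->
  knuth_eq (upper_word a (h - d) ++ [:: cell (h - d) k]) (upper_word a' (h - d)).
Proof.
have Hh : h < n by rewrite /h; lia.
elim: d => [|d IH] Hd.
  rewrite subn0 (upper_wordS a Hh) (upper_wordS a' Hh) stair_row_end upper_word_above //.
  by rewrite -catA; exact: rt_refl.
set m := h - d.+1; have Hm : m < h by rewrite /m; lia.
have Hm1 : m.+1 = h - d by rewrite /m; lia.
have [R1 [R2 [E1 E2 HR1]]] := stair_row_below Hm.
rewrite (upper_wordS a (ltn_trans Hm Hh)) (upper_wordS a' (ltn_trans Hm Hh)) E1 E2.
apply: (@rt_trans _ _ _ (upper_word a m.+1 ++ cell m.+1 k :: R1 ++ cell m k :: R2)).
  have Hs : sorted ltn (R1 ++ cell m.+1 k :: R2) by rewrite -E1; exact: sorted_stair_row.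
  have := knuth_eq_cat (upper_word a m.+1) [::]
            (knuth_eq_row_insert Hs HR1 (@cell_lt_diag m k m.+1 k (ltnSn _))).
  by rewrite !cats0 -!catA.
have := knuth_eq_cat [::] (R1 ++ cell m k :: R2) (IH (ltnW Hd)).
by rewrite -Hm1 /= -!catA.
Qed.

Lemma knuth_eq_stair_insert :
  knuth_eq (stair_word a ++ [:: cell 0 k]) (stair_word a').
Proof. by have := knuth_eq_upper_insert (leqnn h); rewrite subnn. Qed.

End ColumnCompletion.

End Staircase.

Lemma knuth_eq_stair_insert_seq n a l :
  uniq l -> all (ltn^~ n) l -> {in l, forall j, a j = false} ->
  knuth_eq (stair_word n a ++ map (cell 0) l) (stair_word n (fun j => (j \in l) || a j)).
Proof.
elim: l a => [|k l IH] a Hu Hl Ha; first by rewrite cats0; exact: rt_refl.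
case/andP: Hu => Hkl Hu; case/andP: Hl => Hkn Hl.
have Hak : a k = false by apply: Ha; rewrite mem_head.
apply: (@rt_trans _ _ _ (stair_word n (fun j => (j == k) || a j) ++ map (cell 0) l)).
  by have := knuth_eq_cat [::] (map (cell 0) l) (knuth_eq_stair_insert Hkn Hak); rewrite -catA.
have -> : stair_word n (fun j => (j \in k :: l) || a j) =
          stair_word n (fun j => (j \in l) || ((j == k) || a j)).
  by apply: eq_upper_word => j; rewrite in_cons -orbA orbCA.
apply: IH => // j Hj; rewrite Ha ?inE ?Hj ?orbT // orbF.
by apply/negbTE; apply: contraNneq Hkl => <-.
Qed.

Lemma size_stair_word_full n : size (stair_word n (ltn^~ n)) = 'C(n.+1, 2).
Proof.
suff H d : d <= n -> size (upper_word n (ltn^~ n) (n - d)) = 'C(d.+1, 2).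
  by have := H n (leqnn n); rewrite subnn.
elim: d => [|d IH] Hd; first by rewrite subn0 /upper_word subnn.
rewrite upper_wordS ?size_cat; last by lia.
rewrite (_ : (n - d.+1).+1 = n - d); last by lia.
rewrite IH ?(ltnW Hd) // size_map size_iota /row_size /= [in RHS]binS bin1.
have -> : n.-1 - (n - d.+1) < n by lia.
lia.
Qed.

Lemma mem_stair_word_full n z : z \in stair_word n (ltn^~ n) -> 0 < z <= 'C(n.+1, 2).
Proof.
move=> /mem_upper_word [i [j [/andP[_ Hi] Hj ->]]].
move: Hj; rewrite /row_size /= (_ : n.-1 - i < n) => [Hj|]; last by lia.
have Hjn : j < n by lia.
by rewrite /= Hjn subn1 /= cell_le ?andbT ?/cell ?addnS //; lia.
Qed.

Definition perm_seq n (s : 'S_n) : seq nat := [seq val (s i) | i <- enum 'I_n].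

Lemma size_perm_seq n (s : 'S_n) : size (perm_seq s) = n.
Proof. by rewrite size_map size_enum_ord. Qed.

Lemma nth_perm_seq n (s : 'S_n) (i : 'I_n) : nth 0 (perm_seq s) i = s i.
Proof. by rewrite (nth_map i) ?size_enum_ord // nth_ord_enum. Qed.

Lemma mem_perm_seq n (s : 'S_n) j : (j \in perm_seq s) = (j < n).
Proof.
apply/mapP/idP => [[i _ ->]|Hj]; first exact: ltn_ord.
by exists (s^-1 (Ordinal Hj))%g; rewrite ?mem_enum ?permKV.
Qed.

Lemma perm_seq_uniq n (s : 'S_n) : uniq (perm_seq s).
Proof. by rewrite map_inj_uniq ?enum_uniq // => i j /val_inj /perm_inj. Qed.

Definition stair_perm_word n (s : 'S_n) : seq nat :=
  stair_word n xpred0 ++ map (cell 0) (perm_seq s).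

Lemma knuth_eq_stair_perm_word n (s : 'S_n) :
  knuth_eq (stair_perm_word s) (stair_word n (ltn^~ n)).
Proof.
have <- : stair_word n (fun j => (j \in perm_seq s) || xpred0 j) = stair_word n (ltn^~ n).
  by apply: eq_upper_word => j; rewrite mem_perm_seq orbF.
apply: knuth_eq_stair_insert_seq (perm_seq_uniq s) _ _ => //.
by apply/allP => j; rewrite mem_perm_seq.
Qed.

Lemma nth_oneline N (v : 'S_N) (i : 'I_N) : nth 0 (oneline v) i = (v i).+1.
Proof. by rewrite (nth_map i) ?size_enum_ord // nth_ord_enum. Qed.

Lemma oneline_onto N w : size w = N -> uniq w -> all (fun z => 0 < z <= N) w ->
  exists v : 'S_N, oneline v = w.
Proof.
move=> Hs Hu /allP Hw.
have Hnth (i : 'I_N) : nth 0 w i \in w by rewrite mem_nth ?Hs.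
have Hlt (i : 'I_N) : (nth 0 w i).-1 < N by have := Hw _ (Hnth i); lia.
have f_inj : injective (fun i => Ordinal (Hlt i)).
  move=> i j /(congr1 val) /= E; apply/val_inj/eqP.
  have {}E : nth 0 w i = nth 0 w j by have := Hw _ (Hnth i); have := Hw _ (Hnth j); lia.
  by rewrite -(nth_uniq 0 _ _ Hu) ?Hs ?ltn_ord // E.
exists (perm f_inj); apply: (@eq_from_nth _ 0); first by rewrite size_map size_enum_ord Hs.
move=> i; rewrite size_map size_enum_ord => Hi.
rewrite (nth_oneline _ (Ordinal Hi)) permE /=.
by have /= := Hw _ (Hnth (Ordinal Hi)); lia.
Qed.

Lemma size_stair_word_empty n : size (stair_word n xpred0) + n = 'C(n.+1, 2).
Proof.
have /perm_size := knuth_eq_perm (knuth_eq_stair_perm_word (1%g : 'S_n)).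
by rewrite size_stair_word_full size_cat size_map size_perm_seq.
Qed.

Lemma oneline_stair_perm_word n (s : 'S_n) :
  exists v : 'S_('C(n.+1, 2)), oneline v = stair_perm_word s.
Proof.
have Hp := knuth_eq_perm (knuth_eq_stair_perm_word s).
apply: oneline_onto; first by rewrite (perm_size Hp) size_stair_word_full.
  by rewrite (perm_uniq Hp) uniq_upper_word.
by apply/allP => z; rewrite (perm_mem Hp); exact: mem_stair_word_full.
Qed.

Lemma Pword_stair_perm_word n (s : 'S_n) :
  Pword (stair_perm_word s) = Pword (stair_word n (ltn^~ n)).
Proof.
have Hk := knuth_eq_stair_perm_word s.
by rewrite (knuth_eq_Pword Hk) // (perm_uniq (knuth_eq_perm Hk)) uniq_upper_word.
Qed.

Lemma nth_stair_perm_word_prefix n (s : 'S_n) i : i < 'C(n.+1, 2) - n ->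
  nth 0 (stair_perm_word s) i = nth 0 (stair_word n xpred0) i.
Proof. by rewrite -size_stair_word_empty addnK => Hi; rewrite nth_cat Hi. Qed.

Lemma last_pattern_stair n (s : 'S_n) (v : 'S_('C(n.+1, 2))) :
  oneline v = stair_perm_word s -> last_pattern v s.
Proof.
move=> Hv i j _; rewrite Hv -size_stair_word_empty addnK !nth_cat !ltnNge !leq_addr /= !addKn.
by rewrite !(nth_map 0) ?size_perm_seq // !nth_perm_seq -!ltnNge ltn_cell0.
Qed.

Theorem proposition2p6 (n : nat) (x y : 'S_n) :
  1 <= n ->
  exists N : nat, n <= N <= (n * (n + 1)) %/ 2 /\
    exists v w : 'S_N,
      [/\ Ptab v = Ptab w,
          (forall i : 'I_N, i < N - n -> v i = w i),
          last_pattern v x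
        & last_pattern w y].
Proof.
(* The construction needs no assumption on [n]. *)
move=> _; exists 'C(n.+1, 2); split.
  have -> : n * (n + 1) %/ 2 = 'C(n.+1, 2) by rewrite bin2 -divn2 mulnC addn1.
  by rewrite leqnn andbT binS bin1 leq_addl.
have [v Hv] := oneline_stair_perm_word x.
have [w Hw] := oneline_stair_perm_word y.
exists v, w; split; [| | exact: last_pattern_stair Hv | exact: last_pattern_stair Hw].
- have PtabE N (u : 'S_N) : Ptab u = Pword (oneline u) by [].
  by rewrite !PtabE Hv Hw !Pword_stair_perm_word.
- move=> i Hi; apply/val_inj/succn_inj.
  by rewrite -!nth_oneline Hv Hw !nth_stair_perm_word_prefix.
Qed.
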